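(* Suppose $c_0/n\leq p\leq\ln(n)^7/n$ for a sufficiently large constant $c_0>0$. Then with probability $1-o(1)$ as $n\to\infty$ the random graph $G=G(n,p)$ on vertex set $V$ has no set $U\subset V$ with $|U|\leq1/p$ and $\chi(G[U])>\sqrt{np}$.
   Context: $G(n,p)$ is the random graph on $V=\{1,\dots,n\}$ with each possible edge present independently with probability $p$; $G[U]$ is the induced subgraph on $U$ and $\chi$ is the chromatic number. *)

From HB Require Import structures.
From mathcomp Require Import all_boot all_order all_algebra.
From mathcomp Require Import all_classical all_reals all_analysis.
Set Implicit Arguments. Unset Strict Implicit. Unset Printing Implicit Defensive.
Import Order.TTheory GRing.Theory Num.Theory.
Import numFieldNormedType.Exports.
Local Open Scope ring_scope.

(* Vertex set V = 'I_n (i.e. {0,...,n-1}, a relabelling of {1,...,n}).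
   A graph is encoded by its edge set E, a set of ordered pairs (i,j) with i<j
   (each unordered pair {i,j} is stored once, as (min,max)). *)
Definition vpairs (n : nat) : {set 'I_n * 'I_n} := [set e : 'I_n * 'I_n | (e.1 < e.2)%N].

Definition adj (n : nat) (E : {set 'I_n * 'I_n}) (u v : 'I_n) : bool :=
  (u != v) && (((u, v) \in E) || ((v, u) \in E)).

Definition colorable (n : nat) (E : {set 'I_n * 'I_n}) (U : {set 'I_n}) (k : nat) : bool :=
  [exists f : {ffun 'I_n -> 'I_k},
     [forall u in U, forall v in U, adj E u v ==> (f u != f v)]].

(* chromatic number of G[U]: least k <= n such that G[U] is k-colourable
   (n colours always suffice, so this is the true chromatic number). *)
Definition chi (n : nat) (E : {set 'I_n * 'I_n}) (U : {set 'I_n}) : nat :=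
  \big[minn/n]_(k < n.+1 | colorable E U k) k.

Definition gnp_prob (R : realType) (n : nat) (p : R) (E : {set 'I_n * 'I_n}) : R :=
  if E \subset vpairs n
  then p ^+ #|E| * (1 - p) ^+ (#|vpairs n| - #|E|)
  else 0.

Definition gnp_event (R : realType) (n : nat) (p : R)
    (A : {set 'I_n * 'I_n} -> bool) : R :=
  \sum_(E : {set 'I_n * 'I_n} | A E) gnp_prob p E.

(* Let h = floor(sqrt(np)/2) >= 16.  If chi(G[U]) > sqrt(np) >= 2h, then repeatedly
   deleting vertices of degree < 2h (such a vertex can always be recoloured) leaves a
   nonempty W in U of minimum degree >= 2h, so |W| > 2h and G[W] has at least h|W| edges.
   A union bound over such W with |W| = w <= 1/p and over hw-sets of pairs in W x W bounds
   the probability by  sum_w C(n,w) C(w^2,hw) p^(hw) <= sum_w p w 2^-w <= 2p,  using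
   C(m,k) <= (4m/k)^k and np <= (2h+2)^2.  Finally 2p <= 2 ln(n)^7/n tends to 0. *)

From HB Require Import structures.
From mathcomp Require Import all_boot all_order all_algebra.
From mathcomp Require Import all_classical all_reals all_analysis.
From mathcomp Require Import ring lra zify.
Import Order.TTheory GRing.Theory Num.Theory.
Import numFieldNormedType.Exports.
Set Implicit Arguments. Unset Strict Implicit. Unset Printing Implicit Defensive.

Lemma exists_subset_card (T : finType) (B : {set T}) k : (k <= #|B|)%N ->
  exists2 S : {set T}, S \subset B & #|S| = k.
Proof.
move=> kB; have : (0 < #|[set A : {set T} | A \subset B & #|A| == k]|)%N.
  by rewrite cards_draws bin_gt0.
by case/card_gt0P => S; rewrite inE => /andP [SB /eqP Sk]; exists S.
Qed.

Lemma card_pairs_fst (T1 T2 : finType) (A : {set T1 * T2}) :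
  #|A| = (\sum_x #|[set y | (x, y) \in A]|)%N.
Proof.
rewrite -sum1_card (eq_bigr (fun x => \sum_(y | (x, y) \in A) 1)%N); last first.
  by move=> x _; rewrite -sum1_card; apply: eq_bigl => y; rewrite inE.
by rewrite pair_big_dep; apply: eq_bigl => -[].
Qed.

Lemma card_pairs_snd (T1 T2 : finType) (A : {set T1 * T2}) :
  #|A| = (\sum_y #|[set x | (x, y) \in A]|)%N.
Proof.
rewrite -sum1_card (eq_bigr (fun y => \sum_(x | (x, y) \in A) 1)%N); last first.
  by move=> y _; rewrite -sum1_card; apply: eq_bigl => x; rewrite inE.
by rewrite (exchange_big_dep xpredT) //= pair_big_dep; apply: eq_bigl => -[].
Qed.

Section Coloring.
Variables (n : nat) (E : {set 'I_n * 'I_n}).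
Implicit Types (U W : {set 'I_n}) (u v : 'I_n).

Definition nbr W u := [set v in W | adj E u v].

Lemma adj_sym u v : adj E u v = adj E v u.
Proof. by rewrite /adj eq_sym orbC. Qed.

Lemma adjnn u : adj E u u = false.
Proof. by rewrite /adj eqxx. Qed.

Lemma colorable_setD1 U v k :
  colorable E (U :\ v) k -> (#|nbr U v| < k)%N -> colorable E U k.
Proof.
move=> /existsP [f /forall_inP f_ok] deg_v.
have [c c_free] : exists c, c \notin f @: nbr U v.
  apply/existsP; rewrite -negb_forall; apply: contraTN deg_v => /forallP all_used.
  rewrite -leqNgt -[k]card_ord (leq_trans _ (leq_imset_card f _)) //.
  by apply/subset_leq_card/fintype.subsetP => c _; apply: all_used.
apply/existsP; exists [ffun u => if u == v then c else f u].
apply/forall_inP => u uU; apply/forall_inP => w wU; apply/implyP => uw.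
rewrite !ffunE; case: (eqVneq u v) => [euv|uv]; case: (eqVneq w v) => [ewv|wv].
- by move: uw; rewrite euv ewv adjnn.
- by apply: contraNneq c_free => ->; rewrite imset_f // inE wU -euv uw.
- by apply: contraNneq c_free => <-; rewrite imset_f // inE uU adj_sym -ewv uw.
- have := f_ok u; rewrite !inE uv uU => /(_ isT) /forall_inP /(_ w).
  by rewrite !inE wv wU => /(_ isT) /implyP; apply.
Qed.

Lemma uncolorable_min_degree k U : (0 < k)%N -> ~~ colorable E U k ->
  exists W, [/\ W \subset U, (0 < #|W|)%N & forall u, u \in W -> (k <= #|nbr W u|)%N].
Proof.
move=> k_gt0; elim: {U}_.+1 {-2}U (ltnSn #|U|) => // m IH U ltUm ncolU.
have [min_deg|] := boolP [forall u in U, k <= #|nbr U u|].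
  exists U; split => //; last exact/forall_inP.
  rewrite card_gt0; apply: contraNneq ncolU => ->; apply/existsP.
  by exists [ffun=> Ordinal k_gt0]; apply/forall_inP => u; rewrite inE.
case/forall_inPn => v vU; rewrite -ltnNge => deg_v.
have ncolUv : ~~ colorable E (U :\ v) k.
  by apply: contra ncolU => /colorable_setD1; apply.
have ltUvm : (#|U :\ v| < m)%N by move: ltUm; rewrite (cardsD1 v U) vU.
have [W [WUv W_gt0 min_deg]] := IH _ ltUvm ncolUv.
by exists W; split => //; apply: fintype.subset_trans WUv (subD1set _ _).
Qed.

Lemma min_degree_edges h W : (forall u, u \in W -> (2 * h <= #|nbr W u|)%N) ->
  (h * #|W| <= #|E :&: finset.setX W W|)%N.
Proof.
move=> min_deg; set F := E :&: finset.setX W W.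
have deg_split u : u \in W ->
    (#|nbr W u| <= #|[set v | (u, v) \in F]| + #|[set v | (v, u) \in F]|)%N.
  move=> uW; apply: leq_trans (leq_card_setU _ _).
  apply/subset_leq_card/fintype.subsetP => v; rewrite !inE /adj.
  by case/andP=> vW /andP [_ /orP [] ->]; rewrite uW vW ?orbT.
rewrite -(leq_pmul2l (isT : (0 < 2)%N)) mulnA mulnC -sum_nat_const.
apply: leq_trans (_ : \sum_u (#|[set v | (u, v) \in F]| + #|[set v | (v, u) \in F]|) <= _)%N.
  rewrite [X in (_ <= X)%N](bigID (mem W)) /=; apply: leq_trans (leq_addr _ _).
  by apply: leq_sum => u uW; apply: leq_trans (min_deg u uW) (deg_split u uW).
by rewrite big_split /= -card_pairs_fst -card_pairs_snd addnn -mul2n.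
Qed.

Lemma uncolorable_dense_edges h U : (0 < h)%N -> ~~ colorable E U (2 * h) ->
  exists W (S : {set 'I_n * 'I_n}),
    [/\ W \subset U, (2 * h < #|W|)%N, S \subset finset.setX W W, #|S| = (h * #|W|)%N
       & S \subset E].
Proof.
move=> h_gt0 ncolU; have k_gt0 : (0 < 2 * h)%N by rewrite muln_gt0.
have [W [WU /card_gt0P [u uW] min_deg]] := uncolorable_min_degree k_gt0 ncolU.
have nbr_u : (#|nbr W u| < #|W|)%N.
  apply/proper_card/properP; split; last by exists u; rewrite // inE adjnn andbF.
  by apply/fintype.subsetP => v; rewrite inE => /andP [].
have [S SF cardS] := exists_subset_card (min_degree_edges min_deg).
exists W, S; split => //; first exact: leq_ltn_trans (min_deg u uW) nbr_u.
- exact: fintype.subset_trans SF (subsetIr _ _).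
- exact: fintype.subset_trans SF (subsetIl _ _).
Qed.

Lemma chi_le_colorable U k : colorable E U k -> (chi E U <= k)%N.
Proof.
move=> colU; rewrite /chi -minEnat; have [kn|nk] := leqP k n; last first.
  exact: leq_trans (@bigmin_le_id _ nat _ _ _ _ _) (ltnW nk).
exact: (@bigmin_le_cond _ nat _ _ (Ordinal (kn : k < n.+1)%N) _ _ colU).
Qed.

End Coloring.

Local Open Scope ring_scope.

Lemma sum_subsets_by_card (R : nmodType) (T : finType) (X : {set T}) (g : nat -> R) :
  \sum_(G : {set T} | G \subset X) g #|G| = \sum_(k < #|X|.+1) g k *+ 'C(#|X|, k).
Proof.
rewrite (partition_big (fun G : {set T} => inord #|G| : 'I_#|X|.+1) predT) //=.
apply: eq_bigr => k _; rewrite -cards_draws -sumr_const.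
rewrite (eq_bigl (fun G => G \in [set A : {set T} | A \subset X & #|A| == k])); last first.
  move=> G; rewrite inE; case GX: (G \subset X) => //=.
  by rewrite -(inj_eq val_inj) /= inordK // ltnS subset_leq_card.
by apply: eq_bigr => G; rewrite inE => /andP [_ /eqP ->].
Qed.

Lemma sum_subsets_binomial (R : comPzRingType) (T : finType) (X : {set T}) (p : R) :
  \sum_(G : {set T} | G \subset X) p ^+ #|G| * (1 - p) ^+ (#|X| - #|G|) = 1.
Proof.
rewrite (sum_subsets_by_card X (fun k => p ^+ k * (1 - p) ^+ (#|X| - k))).
rewrite -[RHS](expr1n _ #|X|) -[X in X ^+ _](subrK p 1) exprDn.
by apply: eq_bigr => k _; rewrite mulrC.
Qed.

Lemma sum_draws_pairs (R : pzSemiRingType) (T : finType) (W : {set T}) k (q : R) :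
  \sum_(S : {set T * T} | (S \subset finset.setX W W) && (#|S| == k)) q ^+ #|S| =
  'C(#|W| * #|W|, k)%:R * q ^+ k.
Proof.
rewrite (eq_bigr (fun _ => q ^+ k)) => [|S /andP [_ /eqP ->] //].
rewrite sumr_const -cardsX -cards_draws mulr_natl.
by congr (_ *+ _); apply: eq_card => S; rewrite inE.
Qed.

Section Gnp.
Variables (R : realType) (n : nat) (p : R).
Implicit Types (E S : {set 'I_n * 'I_n}) (A : pred {set 'I_n * 'I_n}).

Lemma gnp_prob_ge0 E : 0 <= p <= 1 -> 0 <= gnp_prob p E.
Proof.
case/andP=> p_ge0 p_le1; rewrite /gnp_prob; case: ifP => // _.
by rewrite mulr_ge0 // exprn_ge0 // subr_ge0.
Qed.

Lemma gnp_event_ge0 A : 0 <= p <= 1 -> 0 <= gnp_event p A.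
Proof. by move=> p01; apply: sumr_ge0 => E _; apply: gnp_prob_ge0. Qed.

Lemma gnp_event_superset S : S \subset vpairs n ->
  gnp_event p (fun E => S \subset E) = p ^+ #|S|.
Proof.
move=> SP; set P := vpairs n in SP *; set X := P :\: S.
rewrite /gnp_event /gnp_prob -big_mkcondr /=.
rewrite (reindex_onto (fun G => G :|: S) (fun E => E :\: S)) /=; last first.
  move=> E /andP [SE _]; apply/setP => e; rewrite !inE.
  by case: (boolP (e \in S)) => [/(fintype.subsetP SE) -> | _]; rewrite ?orbT ?andbT ?orbF.
rewrite (eq_bigl (fun G : {set 'I_n * 'I_n} => G \subset X)); last first.
  move=> G; rewrite finset.subsetUr finset.subUset SP andbT.
  rewrite finset.setDUl finset.setDv finset.setU0 subsetD.
  by congr (_ && _); apply/eqP/finset.setDidPl.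
have cardX : #|X| = (#|P| - #|S|)%N by rewrite cardsD (finset.setIidPr SP).
rewrite -[RHS]mulr1 -[in RHS](sum_subsets_binomial X p) big_distrr /=.
apply: eq_bigr => G GX; rewrite cardsU (disjoint_setI0 _) ?cards0 ?subn0.
  by rewrite exprD cardX -subnDA (addnC #|S|) mulrA [p ^+ #|S| * _]mulrC.
by move: GX; rewrite subsetD => /andP [].
Qed.

Lemma gnp_event_superset_le S : 0 <= p -> gnp_event p (fun E => S \subset E) <= p ^+ #|S|.
Proof.
move=> p_ge0; case: (boolP (S \subset vpairs n)) => [SP|nSP].
  by rewrite gnp_event_superset.
rewrite /gnp_event big1 ?exprn_ge0 // => E SE; rewrite /gnp_prob ifF //.
by apply: contraNF nSP; apply: fintype.subset_trans SE.
Qed.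

Lemma gnp_union_bound (I : finType) (P : pred I) (B : I -> pred {set 'I_n * 'I_n}) A :
  0 <= p <= 1 -> (forall E, A E -> exists2 i, P i & B i E) ->
  gnp_event p A <= \sum_(i | P i) gnp_event p (B i).
Proof.
move=> p01 cover; rewrite /gnp_event (exchange_big_dep xpredT) //= big_mkcond /=.
apply: ler_sum => E _; have pr_ge0 := gnp_prob_ge0 E p01.
case: ifP => [/cover [i Pi BiE] | _]; last exact: sumr_ge0.
by rewrite (bigD1 i) /= ?Pi ?BiE //= lerDl sumr_ge0.
Qed.

End Gnp.

Lemma ffact_le_expn m k : (m ^_ k <= m ^ k)%N.
Proof.
elim: k m => [//|k IH] m; rewrite ffactnS expnS leq_mul // (leq_trans (IH _)) //.
by case: k {IH} => // k; rewrite leq_exp2r ?leq_pred.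
Qed.

Lemma sq_mul_exp4_le_expnn h : (16 <= h)%N -> (8 * (2 * h + 2) ^ 2 * 4 ^ h <= h ^ h)%N.
Proof.
move=> h_ge16.
have grow k : (6 <= k)%N -> (8 * (2 * k + 2) ^ 2 <= 4 ^ k)%N.
  move=> /subnKC <-; elim: (k - 6)%N => [//|d IH].
  by rewrite addnS expnS (leq_trans _ (leq_mul (leqnn 4) IH)) //; nia.
rewrite (leq_trans (leq_mul (grow h (leq_trans _ h_ge16)) (leqnn _))) //.
by rewrite -expnMn leq_exp2r // (leq_trans _ h_ge16).
Qed.

Section Estimates.
Variable R : realType.

Lemma expR1_le4 : expR 1 <= 4 :> R.
Proof.
have half_le : 2^-1 <= expR (- 2^-1) :> R by apply: le_trans (expR_ge1Dx _); lra.
have sqrt_e_le2 : expR 2^-1 <= 2 :> R.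
  by rewrite -[X in expR X]opprK expRN invf_ple ?posrE ?expR_gt0.
have -> : expR 1 = expR 2^-1 ^+ 2 :> R by rewrite -expRM_natl mulfV.
by rewrite (_ : 4 = 2 ^+ 2) ?lerXn2r ?nnegrE ?expR_ge0 //; lra.
Qed.

Lemma expnn_le_fact k : k%:R ^+ k <= 4 ^+ k * k`!%:R :> R.
Proof.
rewrite -ler_pdivrMr ?ltr0n ?fact_gt0 //.
case: k => [|k]; first by rewrite expr0 fact0 divr1.
apply: le_trans (_ : expR k.+1%:R <= _).
  by apply: le_trans (expR_ge1Dxn k (ler0n _ _)); rewrite lerDr.
by rewrite -[k.+1%:R]mulr1 expRM_natl lerXn2r ?nnegrE ?expR_ge0 ?expR1_le4.
Qed.

Lemma bin_le_pow m k : (0 < k)%N -> 'C(m, k)%:R <= (4 * m%:R / k%:R) ^+ k :> R.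
Proof.
move=> k_gt0; rewrite expr_div_n ler_pdivlMr ?exprn_gt0 ?ltr0n //.
apply: le_trans (_ : 'C(m, k)%:R * (4 ^+ k * k`!%:R) <= _).
  by rewrite ler_wpM2l ?ler0n ?expnn_le_fact.
rewrite mulrCA -(natrM _ 'C(m, k)) bin_ffact exprMn ler_wpM2l ?exprn_ge0 //.
by rewrite -natrX ler_nat ffact_le_expn.
Qed.

Lemma dense_base_le (a x : R) h : (16 <= h)%N -> 0 <= a -> a <= ((2 * h + 2) ^ 2)%:R ->
  0 < x -> x <= 1 -> 4 * a / x * (4 / h%:R * x) ^+ h <= x / 2.
Proof.
move=> h_ge16 a_ge0 a_le x_gt0 x_le1.
have h_gt0 : 0 < h%:R :> R by rewrite ltr0n (leq_trans _ h_ge16).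
have growth : 8 * a * 4 ^+ h <= h%:R ^+ h.
  apply: le_trans (_ : ((8 * (2 * h + 2) ^ 2 * 4 ^ h)%:R <= _)); last first.
    by rewrite -natrX ler_nat sq_mul_exp4_le_expnn.
  by rewrite natrM (natrM _ 8) (natrX _ 4) ler_wpM2r ?exprn_ge0 // ler_wpM2l.
have x_h : x ^+ h <= x ^+ 2.
  by rewrite ler_wiXn2l ?(ltW x_gt0) // (leq_trans _ h_ge16).
rewrite exprMn expr_div_n.
apply: le_trans (_ : 4 * a / x * (4 ^+ h / h%:R ^+ h * x ^+ 2) <= _).
  apply: ler_wpM2l; first by rewrite divr_ge0 ?mulr_ge0 ?(ltW x_gt0).
  by apply: ler_wpM2l x_h; rewrite divr_ge0 ?exprn_ge0 ?ltW.
rewrite (_ : 4 * a / x * _ = 8 * a * 4 ^+ h / h%:R ^+ h * (x / 2)); last first.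
  by field; rewrite !gt_eqF ?exprn_gt0.
rewrite -[X in _ <= X]mul1r; apply: ler_wpM2r; first by rewrite divr_ge0 ?ltW.
by rewrite ler_pdivrMr ?exprn_gt0 // mul1r.
Qed.

Lemma dense_term_le n w h (q : R) : 0 < q -> (16 <= h)%N -> (0 < w)%N ->
  w%:R * q <= 1 -> n%:R * q <= ((2 * h + 2) ^ 2)%:R ->
  'C(n, w)%:R * ('C(w * w, h * w)%:R * q ^+ (h * w)) <= q * w%:R * 2^-1 ^+ w.
Proof.
move=> q_gt0 h_ge16 w_gt0 x_le1 a_le; set x := w%:R * q in x_le1 *.
have h_gt0 : 0 < h%:R :> R by rewrite ltr0n (leq_trans _ h_ge16).
have w_gt0' : 0 < w%:R :> R by rewrite ltr0n.
have x_gt0 : 0 < x by rewrite mulr_gt0.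
have C_ww : 'C(w * w, h * w)%:R <= (4 * w%:R / h%:R) ^+ (h * w) :> R.
  have -> : 4 * w%:R / h%:R = 4 * (w * w)%:R / (h * w)%:R :> R.
    by rewrite !natrM; field; rewrite !gt_eqF.
  by apply: bin_le_pow; rewrite muln_gt0 w_gt0 andbT (leq_trans _ h_ge16).
set B := 4 * n%:R / w%:R * (4 * w%:R / h%:R * q) ^+ h.
have B_le : B <= x / 2.
  have -> : B = 4 * (n%:R * q) / x * (4 / h%:R * x) ^+ h.
    by rewrite /B /x; congr (_ * _ ^+ _); field; rewrite !gt_eqF.
  exact: dense_base_le h_ge16 (mulr_ge0 (ler0n _ n) (ltW q_gt0)) a_le x_gt0 x_le1.
have B_ge0 : 0 <= B by rewrite /B !(mulr_ge0, divr_ge0, exprn_ge0, ler0n, ltW q_gt0).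
apply: le_trans (_ : B ^+ w <= _).
  have -> : B ^+ w = (4 * n%:R / w%:R) ^+ w * ((4 * w%:R / h%:R) ^+ (h * w) * q ^+ (h * w)).
    by rewrite /B exprMn -exprM -exprMn.
  apply: ler_pM; rewrite ?ler0n ?bin_le_pow //.
    by rewrite mulr_ge0 ?ler0n ?exprn_ge0 ?(ltW q_gt0).
  by rewrite ler_pM2r ?exprn_gt0.
apply: le_trans (_ : (x / 2) ^+ w <= _).
  by apply: lerXn2r; rewrite ?nnegrE ?divr_ge0 ?(ltW x_gt0).
rewrite exprMn [q * _]mulrC -/x ler_pM2r ?exprn_gt0 ?invr_gt0 //.
by rewrite -[X in _ <= X]expr1 ler_wiXn2l ?(ltW x_gt0).
Qed.

Lemma sum_weighted_halves_le N : \sum_(w < N) w%:R * 2^-1 ^+ w <= 2 :> R.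
Proof.
have closed_form : \sum_(w < N) w%:R * 2^-1 ^+ w + N.+1%:R * 2^-1 ^+ N * 2 = 2 :> R.
  elim: N => [|N IH]; first by rewrite big_ord0 add0r expr0 mulr1 mul1r.
  by rewrite big_ord_recr /= -[RHS]IH exprS -addn2 -addn1 !natrD; field.
by rewrite -[X in _ <= X]closed_form lerDl !mulr_ge0 ?exprn_ge0.
Qed.

Lemma sum_dense_witnesses_le n h (q : R) : 0 < q -> (16 <= h)%N ->
  n%:R * q <= ((2 * h + 2) ^ 2)%:R ->
  \sum_(W : {set 'I_n} | (2 * h < #|W|)%N && (#|W|%:R <= q^-1))
    \sum_(S : {set 'I_n * 'I_n} | (S \subset finset.setX W W) && (#|S| == h * #|W|)%N)
      q ^+ #|S| <= 2 * q.
Proof.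
move=> q_gt0 h_ge16 a_le.
pose g w := if (2 * h < w)%N && (w%:R <= q^-1) then 'C(w * w, h * w)%:R * q ^+ (h * w) else 0.
under eq_bigr => W _ do rewrite sum_draws_pairs.
rewrite big_mkcond (eq_bigl (fun W : {set 'I_n} => W \subset [set: 'I_n])) => [|W]; last first.
  by rewrite finset.subsetT.
rewrite (sum_subsets_by_card _ g) cardsT card_ord.
apply: le_trans (_ : \sum_(k < n.+1) q * (k%:R * 2^-1 ^+ k) <= _).
  apply: ler_sum => k _; rewrite /g; case: ifP => [/andP [hk kq] | _]; last first.
    by rewrite mul0rn mulr_ge0 ?mulr_ge0 ?exprn_ge0 ?ler0n ?(ltW q_gt0).
  rewrite -[_ *+ 'C(n, k)]mulr_natl [X in _ <= X]mulrA.
  apply: dense_term_le => //; first exact: leq_ltn_trans (leq0n _) hk.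
  by rewrite -ler_pdivlMr // div1r.
by rewrite -big_distrr /= mulrC ler_pM2r // sum_weighted_halves_le.
Qed.

Lemma sqrt_bracket (a : R) : 4096 <= a ->
  exists h, [/\ (16 <= h)%N, (2 * h)%:R <= Num.sqrt a & a <= ((2 * h + 2) ^ 2)%:R].
Proof.
move=> a_ge; set s := Num.sqrt a.
have s_ge0 : 0 <= s by apply: sqrtr_ge0.
have s_sq : s ^+ 2 = a by rewrite sqr_sqrtr // (le_trans (ler0n _ _) a_ge).
have s_ge64 : 64 <= s.
  by rewrite -(@ler_pXn2r _ 2) ?nnegrE // s_sq (le_trans _ a_ge) // -natrX ler_nat.
set h := Num.truncn (s / 2).
have /andP [h_le h_gt] := truncn_itv (divr_ge0 s_ge0 (ler0n R 2)).
rewrite -/h -(natr1 h) in h_gt.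
exists h; split.
- by rewrite truncn_ge_nat ?divr_ge0 //; lra.
- by rewrite natrM; lra.
- rewrite -[X in X <= _]s_sq natrX lerXn2r ?nnegrE ?ler0n // natrD natrM; lra.
Qed.

Lemma gnp_small_set_high_chi_le n (q : R) : 0 < q -> q <= 1 -> 4096 <= n%:R * q ->
  gnp_event q (fun E : {set 'I_n * 'I_n} => [exists U : {set 'I_n},
    (#|U|%:R <= q^-1) && (Num.sqrt (n%:R * q) < (chi E U)%:R)]) <= 2 * q.
Proof.
move=> q_gt0 q_le1 a_ge; have q01 : 0 <= q <= 1 by rewrite ltW.
have [h [h_ge16 h_le a_le]] := sqrt_bracket a_ge.
have h_gt0 : (0 < h)%N by rewrite (leq_trans _ h_ge16).
pose cW (W : {set 'I_n}) := (2 * h < #|W|)%N && (#|W|%:R <= q^-1).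
pose cS (W : {set 'I_n}) (S : {set 'I_n * 'I_n}) :=
  (S \subset finset.setX W W) && (#|S| == h * #|W|)%N.
apply: le_trans (sum_dense_witnesses_le q_gt0 h_ge16 a_le).
apply: le_trans (gnp_union_bound (P := fun WS => cW WS.1 && cS WS.1 WS.2)
  (B := fun WS E => WS.2 \subset E) q01 _) _.
  move=> E /existsP [U /andP [U_le chi_gt]].
  have ncolU : ~~ colorable E U (2 * h).
    apply: contraTN chi_gt => /chi_le_colorable; rewrite -leNgt -(ler_nat R) => chi_le.
    exact: le_trans chi_le h_le.
  have [W [S [WU hW SW cardS SE]]] := uncolorable_dense_edges h_gt0 ncolU.
  exists (W, S) => //=; rewrite /cW /cS hW SW cardS eqxx /= andbT.
  by apply: le_trans U_le; rewrite ler_nat subset_leq_card.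
rewrite -(pair_big_dep cW cS (fun _ S => gnp_event q (fun E => S \subset E))) /=.
by apply: ler_sum => W _; apply: ler_sum => S _; apply: gnp_event_superset_le; rewrite ltW.
Qed.

Local Open Scope classical_set_scope.

Lemma lnXn_div_le k (x : R) : 0 < x -> 0 < ln x -> ln x ^+ k / x <= k.+1`!%:R / ln x.
Proof.
move=> x_gt0 L_gt0.
have x_ge : ln x ^+ k.+1 / k.+1`!%:R <= x.
  have := expR_ge1Dxn k (ltW L_gt0); rewrite lnK ?posrE //; apply: le_trans.
  by rewrite lerDr ler01.
rewrite ler_pdivrMr // mulrAC ler_pdivlMr // -exprSr.
by rewrite mulrC -ler_pdivrMr ?ltr0n ?fact_gt0.
Qed.

Lemma near_lnXn_div_le k (e : R) : 0 < e -> \forall n \near \oo, ln n%:R ^+ k / n%:R <= e.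
Proof.
move=> e_gt0; set K := k.+1`!%:R : R.
have K_gt0 : 0 < K by rewrite ltr0n fact_gt0.
near=> n.
have n_ge : expR (K / e) <= n%:R by near: n; apply: nbhs_infty_ger.
have n_gt0 : 0 < n%:R :> R := lt_le_trans (expR_gt0 _) n_ge.
have L_ge : K / e <= ln n%:R by rewrite -(expRK (K / e)) ler_ln ?posrE ?expR_gt0.
have L_gt0 : 0 < ln n%:R := lt_le_trans (divr_gt0 K_gt0 e_gt0) L_ge.
apply: le_trans (lnXn_div_le k n_gt0 L_gt0) _.
by rewrite ler_pdivrMr // mulrC -ler_pdivrMr.
Unshelve. all: end_near.
Qed.

End Estimates.

Unset Implicit Arguments. Set Strict Implicit. Set Printing Implicit Defensive.
Local Open Scope classical_set_scope.

Theorem lemma12 (R : realType) :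
  exists c0 : R, 0 < c0 /\
  forall p : nat -> R,
    (\forall n \near \oo, c0 / n%:R <= p n <= ln (n%:R) ^+ 7 / n%:R) ->
    (fun n : nat =>
       gnp_event (p n) (fun E : {set 'I_n * 'I_n} =>
         [exists U : {set 'I_n},
            (#|U|%:R <= (p n)^-1) && (Num.sqrt (n%:R * p n) < (chi E U)%:R)]))
      @ \oo --> (0 : R).
Proof.
have c0_gt0 : 0 < 4096 :> R by rewrite ltr0n.
exists 4096; split => // p p_bounds.
apply/cvgrPdist_le => e e_gt0; near=> n.
have /andP [p_ge p_le] : 4096 / n%:R <= p n <= ln n%:R ^+ 7 / n%:R by near: n.
have ln_small : ln n%:R ^+ 7 / n%:R <= e / 2.
  by near: n; apply: near_lnXn_div_le; rewrite divr_gt0.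
have p_le1 : p n <= 1.
  by apply: le_trans p_le _; near: n; apply: near_lnXn_div_le; rewrite ltr01.
have n_gt0 : 0 < n%:R :> R by near: n; apply: nbhs_infty_gtr.
have p_gt0 : 0 < p n := lt_le_trans (divr_gt0 c0_gt0 n_gt0) p_ge.
have a_ge : 4096 <= n%:R * p n by rewrite mulrC -ler_pdivrMr.
rewrite sub0r normrN ger0_norm ?gnp_event_ge0 ?(ltW p_gt0) //.
by apply: le_trans (gnp_small_set_high_chi_le p_gt0 p_le1 a_ge) _; lra.
Unshelve. all: end_near.
Qed.
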